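(* Let $\mathcal H=\mathcal H_A\otimes\mathcal H_B$ be finite-dimensional with $d=\dim\mathcal H$. Let $H_A(t_i),H_B(t_i),H_A(t_f),H_B(t_f)$ be local Hamiltonians with spectral decompositions $H_X(t_i)=\sum_{l_X}E^i_{l_X}\Pi^i_{l_X}$, $H_X(t_f)=\sum_{k_X}E^f_{k_X}\Pi^f_{k_X}$ ($X=A,B$), let $\Phi$ be a CPTP map on $\mathcal H$ and $\beta>0$. Let $\gamma^X_{\beta,i}=e^{-\beta H_X(t_i)}/\mathcal Z^X_{\beta,i}$, $\gamma^X_{\beta,f}=e^{-\beta H_X(t_f)}/\mathcal Z^X_{\beta,f}$, $\gamma_{\beta,i}=\gamma^A_{\beta,i}\otimes\gamma^B_{\beta,i}$, $\gamma_{\beta,f}=\gamma^A_{\beta,f}\otimes\gamma^B_{\beta,f}$, and $\Delta F=-\beta^{-1}\ln\big(\mathcal Z^A_{\beta,f}\mathcal Z^B_{\beta,f}/(\mathcal Z^A_{\beta,i}\mathcal Z^B_{\beta,i})\big)$. Suppose the initial state is $\rho_i=\gamma^A_{\beta,i}\otimes\gamma^B_{\beta,i}+\mathfrak E_{AB}$ with $\mathfrak E_{AB}$ a Hermitian operator satisfying $\mathrm{Tr}_A\mathfrak E_{AB}=\mathrm{Tr}_B\mathfrak E_{AB}=0$. Then the bipartite EPM average satisfies $$\big\langle e^{-\beta(\Delta E-\Delta F)}\big\rangle=\Big\{d+\mathrm{Tr}\big(\gamma_{\beta,i}^{-1}\mathfrak E_{AB}\big)\Big\}\Big\{\mathrm{Tr}\big(\gamma_{\beta,f}\Phi[\gamma_{\beta,i}]\big)+\mathrm{Tr}\big(\gamma_{\beta,f}\Phi[\mathfrak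 E_{AB}]\big)\Big\}.$$
   Context: Bipartite EPM statistics: with $\mathbf l=(l_A,l_B)$, $\mathbf k=(k_A,k_B)$, the joint distribution is $p^{\mathbf l,\mathbf k}=\mathrm{Tr}(\rho_i\,\Pi^i_{l_A}\otimes\Pi^i_{l_B})\,\mathrm{Tr}(\Phi[\rho_i]\,\Pi^f_{k_A}\otimes\Pi^f_{k_B})$, the energy change is $\Delta E_{\mathbf l,\mathbf k}=E^f_{k_A}+E^f_{k_B}-E^i_{l_A}-E^i_{l_B}$, and $\langle g(\Delta E)\rangle=\sum_{\mathbf l,\mathbf k}p^{\mathbf l,\mathbf k}g(\Delta E_{\mathbf l,\mathbf k})$. $\Phi$ is extended linearly to non-positive operators. *)

From HB Require Import structures.
From mathcomp Require Import all_boot all_order all_algebra.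
From mathcomp Require Import reals.
From mathcomp Require Import sequences exp.
From mathcomp Require Import complex mxtens.
Set Implicit Arguments.
Unset Strict Implicit.
Unset Printing Implicit Defensive.
Import Order.TTheory GRing.Theory Num.Theory.
Local Open Scope ring_scope.

Section QDefs.
Variable R : realType.
Local Notation C := R[i].

Definition toC (x : R) : C := (x%:C)%C.

Definition selfadjoint (m : nat) (A : 'M[C]_m) : Prop :=
  map_mx Num.conj (A^T) = A.

Definition psd (m : nat) (A : 'M[C]_m) : Prop :=
  selfadjoint A /\
  forall v : 'rV[C]_m, 0 <= (v *m A *m (map_mx Num.conj v)^T) 0 0.

Definition density (m : nat) (A : 'M[C]_m) : Prop := psd A /\ \tr A = 1.

Record spectral_decomp (m p : nat) (H : 'M[C]_m)
    (E : 'I_p -> R) (P : 'I_p -> 'M[C]_m) : Prop := {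
  sd_inj : injective E;
  sd_herm : forall l, selfadjoint (P l);
  sd_orth : forall l l', P l *m P l' = if l == l' then P l else 0;
  sd_nz : forall l, P l != 0;
  sd_sum : \sum_l P l = 1%:M;
  sd_eq : H = \sum_l toC (E l) *: P l }.

(* functional calculus: e^{-beta H} = sum_l e^{-beta E_l} Pi_l *)
Definition expmx_spec (m p : nat) (beta : R) (E : 'I_p -> R)
    (P : 'I_p -> 'M[C]_m) : 'M[C]_m :=
  \sum_l toC (expR (- (beta * E l))) *: P l.

Definition partZ (m p : nat) (beta : R) (E : 'I_p -> R)
    (P : 'I_p -> 'M[C]_m) : R :=
  complex.Re (\tr (expmx_spec beta E P)).

Definition gibbs (m p : nat) (beta : R) (E : 'I_p -> R)
    (P : 'I_p -> 'M[C]_m) : 'M[C]_m :=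
  toC ((partZ beta E P)^-1) *: expmx_spec beta E P.

Definition ptraceA (m n : nat) (X : 'M[C]_(m * n)) : 'M[C]_n :=
  \matrix_(j, l) \sum_(i < m) X (mxtens_index (i, j)) (mxtens_index (i, l)).
Definition ptraceB (m n : nat) (X : 'M[C]_(m * n)) : 'M[C]_m :=
  \matrix_(i, k) \sum_(j < n) X (mxtens_index (i, j)) (mxtens_index (k, j)).

(* ampliation id_k (x) Phi acting on 'M_(k * d) *)
Definition ampl (k d : nat) (Phi : 'M[C]_d -> 'M[C]_d) (X : 'M[C]_(k * d))
  : 'M[C]_(k * d) :=
  \matrix_(r, s)
    Phi (\matrix_(a, b) X (mxtens_index ((mxtens_unindex r).1, a))
                          (mxtens_index ((mxtens_unindex s).1, b)))
        (mxtens_unindex r).2 (mxtens_unindex s).2.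

Definition completely_positive (d : nat) (Phi : 'M[C]_d -> 'M[C]_d) : Prop :=
  forall (k : nat) (X : 'M[C]_(k * d)), psd X -> psd (ampl Phi X).

Definition trace_preserving (d : nat) (Phi : 'M[C]_d -> 'M[C]_d) : Prop :=
  forall X, \tr (Phi X) = \tr X.

Definition CPTP (d : nat) (Phi : {linear 'M[C]_d -> 'M[C]_d}) : Prop :=
  completely_positive Phi /\ trace_preserving Phi.

Definition epm_avg (m n pAi pBi pAf pBf : nat)
    (EAi : 'I_pAi -> R) (PAi : 'I_pAi -> 'M[C]_m)
    (EBi : 'I_pBi -> R) (PBi : 'I_pBi -> 'M[C]_n)
    (EAf : 'I_pAf -> R) (PAf : 'I_pAf -> 'M[C]_m)
    (EBf : 'I_pBf -> R) (PBf : 'I_pBf -> 'M[C]_n)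
    (Phi : 'M[C]_(m * n) -> 'M[C]_(m * n)) (rho : 'M[C]_(m * n))
    (g : R -> R) : C :=
  \sum_(lA < pAi) \sum_(lB < pBi) \sum_(kA < pAf) \sum_(kB < pBf)
     (\tr (rho *m (PAi lA *t PBi lB)) *
      \tr (Phi rho *m (PAf kA *t PBf kB)) *
      toC (g (EAf kA + EBf kB - EAi lA - EBi lB))).

End QDefs.

From HB Require Import structures.
From mathcomp Require Import all_boot all_order all_algebra.
From mathcomp Require Import reals.
From mathcomp Require Import sequences exp.
From mathcomp Require Import complex mxtens.
From mathcomp Require Import ring.
Set Implicit Arguments.
Unset Strict Implicit.
Unset Printing Implicit Defensive.
Import Order.TTheory GRing.Theory Num.Theory.
Local Open Scope ring_scope.

(* With the exponential weight, e^{-beta (Delta E - Delta F)} splits into a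
   product of one factor per measured eigenvalue, so the EPM average factors as
   Tr(rho_i M_i) Tr(Phi[rho_i] M_f), where M_i = Z_i^A Z_i^B e^{beta H_A(t_i)}
   (x) e^{beta H_B(t_i)} = gamma_i^{-1} and M_f = gamma_f.  Splitting
   rho_i = gamma_i + E_AB in each trace, and using the linearity of Phi in the
   second one, gives the two braces. *)

Section TensorBilinear.
Variable R : pzRingType.

Lemma tensmxDl m n p q (A1 A2 : 'M[R]_(m, n)) (B : 'M[R]_(p, q)) :
  (A1 + A2) *t B = A1 *t B + A2 *t B.
Proof. by apply/matrixP => i j; rewrite !mxE mulrDl. Qed.

Lemma tensmxDr m n p q (A : 'M[R]_(m, n)) (B1 B2 : 'M[R]_(p, q)) :
  A *t (B1 + B2) = A *t B1 + A *t B2.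
Proof. by apply/matrixP => i j; rewrite !mxE mulrDr. Qed.

Lemma tensmx_suml m n p q (I : finType) (A : I -> 'M[R]_(m, n))
    (B : 'M[R]_(p, q)) :
  (\sum_i A i) *t B = \sum_i A i *t B.
Proof.
by rewrite (big_morph (fun X => X *t B) (fun A1 A2 => tensmxDl A1 A2 B) (tens0mx B)).
Qed.

Lemma tensmx_sumr m n p q (J : finType) (A : 'M[R]_(m, n))
    (B : J -> 'M[R]_(p, q)) :
  A *t (\sum_j B j) = \sum_j A *t B j.
Proof. by rewrite (big_morph (fun Y => A *t Y) (tensmxDr A) (tensmx0 A)). Qed.

Lemma tensmxZl m n p q c (A : 'M[R]_(m, n)) (B : 'M[R]_(p, q)) :
  (c *: A) *t B = c *: (A *t B).
Proof. by apply/matrixP => i j; rewrite !mxE mulrA. Qed.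

Lemma tensmx1 m n : (1%:M : 'M[R]_m) *t (1%:M : 'M[R]_n) = 1%:M.
Proof.
apply/matrixP => i j.
case: (mxtens_indexP i) => i1 i2; case: (mxtens_indexP j) => j1 j2.
rewrite tensmxE !mxE (can_eq (@mxtens_indexK _ _)) xpair_eqE.
by case: (i1 == j1); case: (i2 == j2); rewrite ?mulr1 ?mulr0.
Qed.

End TensorBilinear.

Section TensorTrace.
Variable R : comPzRingType.

Lemma tensmxZr m n p q c (A : 'M[R]_(m, n)) (B : 'M[R]_(p, q)) :
  A *t (c *: B) = c *: (A *t B).
Proof. by apply/matrixP => i j; rewrite !mxE mulrCA. Qed.

Lemma mxtrace_mul_tens_sum m n (I J : finType) (X : 'M[R]_(m * n))
    (a : I -> R) (b : J -> R) (A : I -> 'M[R]_m) (B : J -> 'M[R]_n) :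
  \tr (X *m ((\sum_i a i *: A i) *t (\sum_j b j *: B j)))
  = \sum_i \sum_j \tr (X *m (A i *t B j)) * (a i * b j).
Proof.
rewrite tensmx_suml mulmx_sumr linear_sum; apply: eq_bigr => i _.
rewrite tensmxZl tensmx_sumr scaler_sumr mulmx_sumr linear_sum.
apply: eq_bigr => j _.
by rewrite /= tensmxZr scalerA -scalemxAr mxtraceZ mulrC.
Qed.

End TensorTrace.

Lemma invmx_right (R : comUnitRingType) n (A B : 'M[R]_n) :
  A *m B = 1%:M -> invmx A = B.
Proof.
move=> AB; have [Aunit _] := mulmx1_unit AB.
by rewrite -[RHS]mul1mx -(mulVmx Aunit) -mulmxA AB mulmx1.
Qed.

Lemma mxtrace_mul_conjT_gt0 (C : numClosedFieldType) m (A : 'M[C]_m) :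
  A != 0 -> 0 < \tr (A *m map_mx Num.conj A^T).
Proof.
move=> A_neq0.
have trE : \tr (A *m map_mx Num.conj A^T) = \sum_i \sum_j A i j * (A i j)^*.
  by apply: eq_bigr => i _; rewrite mxE; apply: eq_bigr => j _; rewrite !mxE.
have summand_ge0 i j : 0 <= A i j * (A i j)^* by exact: mul_conjC_ge0.
have row_ge0 i : 0 <= \sum_j A i j * (A i j)^* by exact: sumr_ge0.
rewrite trE lt_def sumr_ge0 // andbT; apply: contra A_neq0 => /eqP tr0.
apply/eqP/matrixP => i j; rewrite mxE; apply/eqP; rewrite -mul_conjC_eq0.
have row_i_eq0 := psumr_eq0P (fun i _ => row_ge0 i) tr0 (i := i) isT.
by rewrite (psumr_eq0P (fun j _ => summand_ge0 i j) row_i_eq0 (i := j)).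
Qed.

Lemma mxtrace_addmx_mul_invmx (R : comUnitRingType) n (G X : 'M[R]_n) :
  G \in unitmx -> \tr ((G + X) *m invmx G) = n%:R + \tr (invmx G *m X).
Proof.
by move=> G_unit; rewrite mulmxDl mulmxV // mxtraceD mxtrace1 mxtrace_mulC.
Qed.

Lemma expR_free_energy_split (R : realType) (beta zAi zBi zAf zBf a b c d : R) :
  beta != 0 -> 0 < zAi -> 0 < zBi -> 0 < zAf -> 0 < zBf ->
  expR (- (beta * ((a + b - c - d)
                   - - beta^-1 * ln (zAf * zBf / (zAi * zBi)))))
  = zAi * expR (beta * c) * (zBi * expR (beta * d))
    * (expR (- (beta * a)) / zAf * (expR (- (beta * b)) / zBf)).
Proof.
move=> beta_neq0 zAi_gt0 zBi_gt0 zAf_gt0 zBf_gt0.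
have ratio_gt0 : 0 < zAf * zBf / (zAi * zBi) by rewrite !(mulr_gt0, invr_gt0).
have -> : - (beta * ((a + b - c - d) - - beta^-1 * ln (zAf * zBf / (zAi * zBi))))
    = - (beta * a) + - (beta * b) + beta * c + beta * d
      + - ln (zAf * zBf / (zAi * zBi)) by field.
rewrite !expRD [expR (- ln _)]expRN lnK //.
by field; rewrite !gt_eqF.
Qed.

Section Spectral.
Variable R : realType.
Local Notation C := R[i].

Lemma toCM (x y : R) : toC (x * y) = toC x * toC y.
Proof. exact: rmorphM. Qed.

Definition gibbs_inverse m p beta (E : 'I_p -> R) (P : 'I_p -> 'M[C]_m) :=
  \sum_l toC (partZ beta E P * expR (beta * E l)) *: P l.

Variables (m p : nat) (H : 'M[C]_m) (E : 'I_p -> R) (P : 'I_p -> 'M[C]_m).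
Hypothesis sd : spectral_decomp H E P.

Lemma spectral_mulmx (a b : 'I_p -> C) :
  (\sum_l a l *: P l) *m (\sum_l b l *: P l) = \sum_l (a l * b l) *: P l.
Proof.
rewrite mulmx_suml; apply: eq_bigr => l _.
rewrite mulmx_sumr (bigD1 l) //= big1 ?addr0 => [|k /negbTE k_neq_l].
  by rewrite -scalemxAl -scalemxAr (sd_orth sd) eqxx scalerA mulrC.
by rewrite -scalemxAl -scalemxAr (sd_orth sd) eq_sym k_neq_l !scaler0.
Qed.

Lemma mxtrace_spectral_proj_gt0 l : 0 < \tr (P l).
Proof.
have <- : P l *m map_mx Num.conj (P l)^T = P l.
  by rewrite (sd_herm sd) (sd_orth sd) eqxx.
exact/mxtrace_mul_conjT_gt0/(sd_nz sd).
Qed.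

Lemma spectral_size_gt0 : (0 < m)%N -> (0 < p)%N.
Proof.
case: m H P sd => // m' H' P' sd' _; case: p E P' sd' => // E' P' sd'.
have /matrixP/(_ ord0 ord0) := sd_sum sd'.
by rewrite big_ord0 !mxE /= => /eqP; rewrite eq_sym oner_eq0.
Qed.

Lemma partZ_gt0 beta : (0 < m)%N -> 0 < partZ beta E P.
Proof.
move=> /spectral_size_gt0 p_gt0.
have term_gt0 l : 0 < \tr (toC (expR (- (beta * E l))) *: P l).
  by rewrite mxtraceZ mulr_gt0 ?mxtrace_spectral_proj_gt0 // ltcR expR_gt0.
suff : 0 < \tr (expmx_spec beta E P) by rewrite ltcE => /andP[].
rewrite /expmx_spec linear_sum (bigD1 (Ordinal p_gt0)) //= ltr_wpDr //.
by apply: sumr_ge0 => l _; apply: ltW.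
Qed.

Lemma gibbsE beta :
  gibbs beta E P
  = \sum_l toC (expR (- (beta * E l)) / partZ beta E P) *: P l.
Proof.
rewrite /gibbs /expmx_spec scaler_sumr; apply: eq_bigr => l _.
by rewrite scalerA -toCM mulrC.
Qed.

Lemma mulmx_gibbs_inverse beta : (0 < m)%N ->
  gibbs beta E P *m gibbs_inverse beta E P = 1%:M.
Proof.
move=> /(partZ_gt0 beta) Z_gt0.
rewrite gibbsE spectral_mulmx -(sd_sum sd); apply: eq_bigr => l _.
rewrite -toCM expRN [X in toC X](_ : _ = 1) ?scale1r //.
by field; rewrite !gt_eqF ?expR_gt0.
Qed.

End Spectral.

Section EPM.
Variable R : realType.
Local Notation C := R[i].

Lemma density_size_gt0 m (rho : 'M[C]_m) : density rho -> (0 < m)%N.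
Proof.
by case: m rho => // rho [_]; rewrite /mxtrace big_ord0 => /eqP; rewrite eq_sym oner_eq0.
Qed.

Lemma epm_avg_factor (m n pAi pBi pAf pBf : nat)
    (EAi : 'I_pAi -> R) (PAi : 'I_pAi -> 'M[C]_m)
    (EBi : 'I_pBi -> R) (PBi : 'I_pBi -> 'M[C]_n)
    (EAf : 'I_pAf -> R) (PAf : 'I_pAf -> 'M[C]_m)
    (EBf : 'I_pBf -> R) (PBf : 'I_pBf -> 'M[C]_n)
    (Phi : 'M[C]_(m * n) -> 'M[C]_(m * n)) (rho : 'M[C]_(m * n)) (g : R -> R)
    (a : 'I_pAi -> C) (b : 'I_pBi -> C) (c : 'I_pAf -> C) (d : 'I_pBf -> C) :
  (forall lA lB kA kB, toC (g (EAf kA + EBf kB - EAi lA - EBi lB))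
                       = a lA * b lB * (c kA * d kB)) ->
  epm_avg EAi PAi EBi PBi EAf PAf EBf PBf Phi rho g
  = \tr (rho *m ((\sum_l a l *: PAi l) *t (\sum_l b l *: PBi l)))
    * \tr (Phi rho *m ((\sum_k c k *: PAf k) *t (\sum_k d k *: PBf k))).
Proof.
move=> g_split; rewrite !mxtrace_mul_tens_sum big_distrl; apply: eq_bigr => lA _.
rewrite big_distrl; apply: eq_bigr => lB _.
rewrite big_distrr; apply: eq_bigr => kA _.
rewrite big_distrr; apply: eq_bigr => kB _.
by rewrite /= g_split; ring.
Qed.

End EPM.

Arguments epm_avg_factor {R m n pAi pBi pAf pBf EAi PAi EBi PBi EAf PAf EBf PBf
  Phi rho g} a b c d.

Theorem mainTheorem5 (R : realType) (m n pAi pBi pAf pBf : nat)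
    (HAi : 'M[R[i]]_m) (EAi : 'I_pAi -> R) (PAi : 'I_pAi -> 'M[R[i]]_m)
    (HBi : 'M[R[i]]_n) (EBi : 'I_pBi -> R) (PBi : 'I_pBi -> 'M[R[i]]_n)
    (HAf : 'M[R[i]]_m) (EAf : 'I_pAf -> R) (PAf : 'I_pAf -> 'M[R[i]]_m)
    (HBf : 'M[R[i]]_n) (EBf : 'I_pBf -> R) (PBf : 'I_pBf -> 'M[R[i]]_n)
    (Phi : {linear 'M[R[i]]_(m * n) -> 'M[R[i]]_(m * n)})
    (beta : R) (EAB rho_i : 'M[R[i]]_(m * n)) :
  spectral_decomp HAi EAi PAi -> spectral_decomp HBi EBi PBi ->
  spectral_decomp HAf EAf PAf -> spectral_decomp HBf EBf PBf ->
  CPTP Phi -> 0 < beta ->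
  selfadjoint EAB -> ptraceA EAB = 0 -> ptraceB EAB = 0 ->
  rho_i = gibbs beta EAi PAi *t gibbs beta EBi PBi + EAB ->
  density rho_i ->
  let gamma_i := gibbs beta EAi PAi *t gibbs beta EBi PBi in
  let gamma_f := gibbs beta EAf PAf *t gibbs beta EBf PBf in
  let DeltaF := - beta^-1 * ln ((partZ beta EAf PAf * partZ beta EBf PBf)
                               / (partZ beta EAi PAi * partZ beta EBi PBi)) in
  epm_avg EAi PAi EBi PBi EAf PAf EBf PBf Phi rho_i
      (fun DE => expR (- (beta * (DE - DeltaF))))
  = ((m * n)%:R + \tr (invmx gamma_i *m EAB))
    * (\tr (gamma_f *m Phi gamma_i) + \tr (gamma_f *m Phi EAB)).
Proof.
move=> sAi sBi sAf sBf _ beta_gt0 _ _ _ rhoE rho_density gi gf DF.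
have /[!muln_gt0] /andP[m_gt0 n_gt0] := density_size_gt0 rho_density.
have ZAi_gt0 := partZ_gt0 sAi beta m_gt0; have ZBi_gt0 := partZ_gt0 sBi beta n_gt0.
have ZAf_gt0 := partZ_gt0 sAf beta m_gt0; have ZBf_gt0 := partZ_gt0 sBf beta n_gt0.
rewrite (epm_avg_factor
  (fun l => toC (partZ beta EAi PAi * expR (beta * EAi l)))
  (fun l => toC (partZ beta EBi PBi * expR (beta * EBi l)))
  (fun k => toC (expR (- (beta * EAf k)) / partZ beta EAf PAf))
  (fun k => toC (expR (- (beta * EBf k)) / partZ beta EBf PBf))); last first.
  by move=> lA lB kA kB; rewrite expR_free_energy_split ?gt_eqF // !toCM.
rewrite -!gibbsE -/gf -!/(gibbs_inverse _ _ _).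
have gi_inv : gi *m (gibbs_inverse beta EAi PAi *t gibbs_inverse beta EBi PBi)
              = 1%:M.
  by rewrite tensmx_mul (mulmx_gibbs_inverse sAi) ?(mulmx_gibbs_inverse sBi) ?tensmx1.
have [gi_unit _] := mulmx1_unit gi_inv.
rewrite -(invmx_right gi_inv) rhoE mxtrace_addmx_mul_invmx //.
by rewrite linearD mulmxDl mxtraceD !(mxtrace_mulC _ gf).
Qed.
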